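(* Consider an $N_r\times N_t$ MIMO setting with constellations $\mathcal{A}_0,\dots,\mathcal{A}_{N_t-1}$ and the associated pseudo-Boolean function $f(z_0,\dots,z_{N-1})=\sum_{S}\bar d_S\prod_{n\in S}z_n$ defined in the context. Let $S\subseteq\{0,\dots,N-1\}$ and suppose there is an antenna index $k$ such that, writing $S_k=S\cap\mathcal{N}_k$, the points $a^{(k)}_{t}\in\mathcal{A}_k$ whose local $N_k$-bit labels $[t]_2$ have bit $0$ at every local position corresponding to $\mathcal{N}_k\setminus S_k$ form a family of rectangles in $\mathbb{C}$ (each with four of these points as vertices, together covering all of them) such that no two rectangles share a vertex, and in each rectangle the local labels of one diagonal pair both contain an odd number of $0$s while those of the other diagonal pair both contain an even number of $0$s. Then $\bar d_S=0$ for all $\mathbf{y}\in\mathbb{C}^{N_r}$ and $\mathbf{H}\in\mathbb{C}^{N_r\times N_t}$.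
   Context: For $k=0,\dots,N_t-1$, $\mathcal{A}_k=\{a^{(k)}_0,\dots,a^{(k)}_{M_k-1}\}\subset\mathbb{C}$ with $M_k=2^{N_k}$; the local label of $a^{(k)}_t$ is the $N_k$-bit binary representation $[t]_2$ (most significant bit first). Let $N=\sum_k N_k$ and $\mathcal{N}_k=\{\sum_{l<k}N_l,\dots,\sum_{l\le k}N_l-1\}$. A joint index $i\in\{0,\dots,2^N-1\}$ corresponds to a tuple $(i_0,\dots,i_{N_t-1})$ via concatenation of binary representations: the $N$-bit representation $b_0(i)\cdots b_{N-1}(i)$ of $i$ equals $[i_0]_2[i_1]_2\cdots[i_{N_t-1}]_2$, so bits at positions $\mathcal{N}_k$ form $[i_k]_2$. Given received vector $\mathbf{y}=(y_0,\dots,y_{N_r-1})$ and channel matrix $\mathbf{H}=(h_{l,k})$, set $d_{l,i}=\big|y_l-\sum_{k}h_{l,k}a^{(k)}_{i_k}\big|^2$ and $f(z_0,\dots,z_{N-1})=\sum_{l=0}^{N_r-1}\sum_{i}d_{l,i}\prod_{n=0}^{N-1}B_{i,n}(z_n)$, $z_n\in\{0,1\}$, where $B_{i,n}(z)=z$ if $b_n(i)=1$ and $1-z$ if $b_n(i)=0$. Its multilinear expansion is $f=\sum_{S\subseteq\{0,\dots,N-1\}}\bar d_S\prod_{n\in S}z_n$, with $\bar d_S=\sum_{l}\sum_{i:\,b_n(i)=0\ \forall n\notin S}d_{l,i}\prod_{n\in S}(-1)^{1-b_n(i)}$. *)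

From HB Require Import structures.
From mathcomp Require Import all_boot all_order all_algebra.
From mathcomp Require Import complex.
From mathcomp Require Import reals.
Set Implicit Arguments. Unset Strict Implicit. Unset Printing Implicit Defensive.
Import Order.TTheory GRing.Theory Num.Theory.
Local Open Scope ring_scope.

Section MIMO.
Variable Nt : nat.
(* Nk k = N_k : number of bits labelling constellation A_k, M_k = 2^(N_k) *)
Variable Nk : 'I_Nt -> nat.

Definition Ntot : nat := (\sum_(k < Nt) Nk k)%N.

(* offset of block N_k: sum_{l<k} N_l ; N_k = {off k, ..., off k + Nk k - 1} *)
Definition off (k : 'I_Nt) : nat := (\sum_(l < Nt | (l < k)%N) Nk l)%N.

(* n-th bit (most significant first) of the m-bit representation of t *)
Definition bitm (m t n : nat) : bool := odd (t %/ 2 ^ (m - n.+1)).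

Definition gbit (i n : nat) : bool := bitm Ntot i n.

(* local index i_k of joint index i: the bits of i at positions N_k *)
Definition loc (k : 'I_Nt) (i : nat) : nat :=
  ((i %/ 2 ^ (Ntot - (off k + Nk k))) %% 2 ^ (Nk k))%N.

Definition inS (S : {set 'I_Ntot}) (p : nat) : bool :=
  [exists n : 'I_Ntot, (n \in S) && (nat_of_ord n == p)].

Definition nzeros (m t : nat) : nat := count (fun j => ~~ bitm m t j) (iota 0 m).

Variable R : realType.
Notation C := R[i].

(* A k t = a^{(k)}_t  (only t < 2^(Nk k) is relevant) *)
Variable A : 'I_Nt -> nat -> C.

Definition dli (Nr : nat) (y : 'I_Nr -> C) (H : 'M[C]_(Nr, Nt)) (l : 'I_Nr) (i : nat) : C :=
  `| y l - \sum_(k < Nt) H l k * A k (loc k i) | ^+ 2.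

Definition dbar (Nr : nat) (y : 'I_Nr -> C) (H : 'M[C]_(Nr, Nt)) (S : {set 'I_Ntot}) : C :=
  \sum_(l < Nr) \sum_(i < 2 ^ Ntot | [forall n : 'I_Ntot, (n \notin S) ==> ~~ gbit i n])
     dli y H l i * \prod_(n in S) (-1) ^+ (1 - gbit i n).

Definition Pk (S : {set 'I_Ntot}) (k : 'I_Nt) (t : nat) : bool :=
  [forall j : 'I_(Nk k), ~~ inS S (off k + j) ==> ~~ bitm (Nk k) t j].

Definition Plist (S : {set 'I_Ntot}) (k : 'I_Nt) : seq nat :=
  [seq t <- iota 0 (2 ^ Nk k) | Pk S k t].

(* a1 a2 a3 a4 (in cyclic order) are the vertices of a rectangle:
   a parallelogram with a right angle at a2. *)
Definition is_rectangle (a1 a2 a3 a4 : C) : Prop :=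
  a1 - a2 = a4 - a3 /\ 'Re ((a1 - a2) * (a3 - a2)^*) = 0.

Definition quad_verts (q : nat * nat * nat * nat) : seq nat :=
  let: (t1, t2, t3, t4) := q in [:: t1; t2; t3; t4].

Definition rect_cond (S : {set 'I_Ntot}) (k : 'I_Nt) : Prop :=
  exists rects : seq (nat * nat * nat * nat),
    [/\ perm_eq (flatten (map quad_verts rects)) (Plist S k),
        uniq (map (A k) (flatten (map quad_verts rects))) &
        forall q, q \in rects ->
          let: (t1, t2, t3, t4) := q in
          [/\ is_rectangle (A k t1) (A k t2) (A k t3) (A k t4),
              odd (nzeros (Nk k) t1), odd (nzeros (Nk k) t3),
              ~~ odd (nzeros (Nk k) t2) & ~~ odd (nzeros (Nk k) t4)]].

End MIMO.

From HB Require Import structures.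
From mathcomp Require Import all_boot all_order all_algebra.
From mathcomp Require Import complex.
From mathcomp Require Import reals.
From mathcomp Require Import zify ring.
Import Order.TTheory GRing.Theory Num.Theory.
Set Implicit Arguments. Unset Strict Implicit. Unset Printing Implicit Defensive.

(* Fix an antenna k with the rectangle property and all bits of the joint index
   outside the block N_k; only the local label t of antenna k varies.  Then
   d_{l,i} = |c - h_{l,k} a^{(k)}_t|^2 with c independent of t, the index is
   admissible iff the outer bits are and t lies in [Plist S k], and for such t
   the sign prod_{n in S} (-1)^{1 - b_n(i)} is a constant times
   (-1)^{#zeros of [t]_2}, since the bits of the block outside S vanish.  The
   partial sum is thus a constant times sum_t (-1)^{#zeros(t)} |c - h a_t|^2,
   which splits over the rectangles and vanishes by the British flag theorem:
   both diagonals of a rectangle have the same sum of squared distances to any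
   point. *)

Lemma divnMDl_pow2 X Y m e : Y < 2 ^ m -> m <= e ->
  (X * 2 ^ m + Y) %/ 2 ^ e = X %/ 2 ^ (e - m).
Proof.
move=> ltY le_me; rewrite -(subnKC le_me) expnD divnMA divnMDl ?expn_gt0 //.
by rewrite (divn_small ltY) addn0 addKn.
Qed.

Lemma odd_divnMDl_pow2 X Y m e : e < m ->
  odd ((X * 2 ^ m + Y) %/ 2 ^ e) = odd (Y %/ 2 ^ e).
Proof.
move=> lt_em; rewrite -(subnK (ltnW lt_em)) expnD mulnA divnMDl ?expn_gt0 //.
by rewrite oddD oddM oddX subn_eq0 leqNgt lt_em /= andbF.
Qed.

Lemma modn_divnMDl_pow2 X Y m e w : e + w <= m ->
  (X * 2 ^ m + Y) %/ 2 ^ e %% 2 ^ w = Y %/ 2 ^ e %% 2 ^ w.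
Proof.
move=> le_m; have -> : m = (m - e - w + w) + e by lia.
by rewrite expnD mulnA divnMDl ?expn_gt0 // expnD mulnA modnMDl.
Qed.

Lemma bitm0 m n : bitm m 0 n = false.
Proof. by rewrite /bitm div0n. Qed.

Lemma inS_val Nt (Nk : 'I_Nt -> nat) (S : {set 'I_(Ntot Nk)}) (n : 'I_(Ntot Nk)) :
  inS S n = (n \in S).
Proof.
apply/existsP/idP => [[m /andP[Sm /eqP eq_mn]]|Sn]; last by exists n; rewrite Sn eqxx.
by rewrite -(val_inj eq_mn).
Qed.

Section JointIndex.
Variables (Nt : nat) (Nk : 'I_Nt -> nat).

Lemma big_ord_le_off (k : 'I_Nt) : \sum_(l < Nt | l < k.+1) Nk l = off Nk k + Nk k.
Proof.
rewrite (bigD1 k) //= addnC; congr (_ + _); apply: eq_bigl => l /=.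
by rewrite ltnS ltn_neqAle andbC.
Qed.

Lemma off_add_le_off (k1 k2 : 'I_Nt) : k1 < k2 -> off Nk k1 + Nk k1 <= off Nk k2.
Proof.
move=> lt_k12; rewrite -big_ord_le_off /off.
apply: (sub_le_big leqnn (fun x y => leq_addr y x)) => l /= lt_lk1.
exact: leq_trans lt_lk1 lt_k12.
Qed.

Lemma off_add_le_Ntot (k : 'I_Nt) : off Nk k + Nk k <= Ntot Nk.
Proof. by rewrite -big_ord_le_off; apply: (sub_le_big leqnn (fun x y => leq_addr y x)). Qed.

Variable k : 'I_Nt.

Definition low_width : nat := Ntot Nk - (off Nk k + Nk k).

(* The joint index whose bits are those of [u], then [[t]_2] on the block N_k,
   then [low_width] bits of [lo]. *)
Definition join_index (u t lo : nat) : nat :=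
  u * 2 ^ (Nk k + low_width) + (t * 2 ^ low_width + lo).

Definition in_block (n : nat) : bool := (off Nk k <= n) && (n < off Nk k + Nk k).

Variables (u lo : nat).
Hypothesis lt_lo : lo < 2 ^ low_width.

Lemma join_index_low_lt t : t < 2 ^ Nk k ->
  t * 2 ^ low_width + lo < 2 ^ (Nk k + low_width).
Proof. by move=> lt_t; rewrite expnD; nia. Qed.

Lemma loc_join_index t : t < 2 ^ Nk k -> loc Nk k (join_index u t lo) = t.
Proof.
move=> lt_t; rewrite /loc -/low_width /join_index modn_divnMDl_pow2 ?(addnC low_width) //.
by rewrite divnMDl_pow2 // subnn expn0 divn1 modn_small.
Qed.

Lemma loc_join_index_other k' t : k' != k -> t < 2 ^ Nk k ->
  loc Nk k' (join_index u t lo) = loc Nk k' (join_index u 0 lo).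
Proof.
move=> neq_k' lt_t; have lt0 : 0 < 2 ^ Nk k by rewrite expn_gt0.
have := off_add_le_Ntot k; have := off_add_le_Ntot k'.
have := join_index_low_lt lt_t; have := join_index_low_lt lt0.
rewrite /loc /join_index /low_width => lt0' lt_t' le_k' le_k.
case: (ltngtP k' k) => [lt_k'k|lt_kk'|/val_inj eq_k']; last by rewrite eq_k' eqxx in neq_k'.
- have := off_add_le_off lt_k'k => le_off.
  by rewrite !divnMDl_pow2 //; lia.
- have := off_add_le_off lt_kk' => le_off.
  by rewrite !modn_divnMDl_pow2 //; lia.
Qed.

Lemma gbit_join_index_out t n : n < Ntot Nk -> ~~ in_block n -> t < 2 ^ Nk k ->
  gbit Nk (join_index u t lo) n = gbit Nk (join_index u 0 lo) n.
Proof.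
move=> lt_n out_n lt_t; have lt0 : 0 < 2 ^ Nk k by rewrite expn_gt0.
have := off_add_le_Ntot k.
have := join_index_low_lt lt_t; have := join_index_low_lt lt0.
rewrite /gbit /bitm /join_index /low_width => lt0' lt_t' le_k.
move: out_n; rewrite /in_block negb_and -!leqNgt => /orP[lt_n_off|le_end_n].
- by rewrite !divnMDl_pow2 //; lia.
- by rewrite !odd_divnMDl_pow2 //; lia.
Qed.

Lemma gbit_join_index_in t n : in_block n -> t < 2 ^ Nk k ->
  gbit Nk (join_index u t lo) n = bitm (Nk k) t (n - off Nk k).
Proof.
move=> /andP[le_off_n lt_n_end] lt_t; have le_k := off_add_le_Ntot k.
rewrite /gbit /bitm /join_index odd_divnMDl_pow2 /low_width; last by lia.
by rewrite divnMDl_pow2 //; first congr (odd (_ %/ 2 ^ _)); lia.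
Qed.

End JointIndex.

Local Open Scope ring_scope.

Lemma signr_count (R : pzRingType) T (p : pred T) (s : seq T) :
  (-1 : R) ^+ count p s = \prod_(x <- s) (-1) ^+ p x.
Proof. by elim: s => [|x s IHs]; rewrite ?big_nil // big_cons /= exprD IHs. Qed.

Section InvolutiveProducts.
Variables (R : comPzRingType) (T : finType).

Lemma prodr_symdiff (f : T -> R) (A B : pred T) : (forall x, f x ^+ 2 = 1) ->
  \prod_(x | A x) f x * \prod_(x | B x) f x =
  \prod_(x | A x && ~~ B x) f x * \prod_(x | B x && ~~ A x) f x.
Proof.
move=> f_invol; rewrite (bigID B A) (bigID A B) /= mulrACA.
have -> : \prod_(x | B x && A x) f x = \prod_(x | A x && B x) f x.
  by apply: eq_bigl => x; rewrite andbC.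
by rewrite -big_split /= big1 ?mul1r // => x _; rewrite -expr2 f_invol.
Qed.

Lemma eq_prodr_symdiff (f g : T -> R) (A B : pred T) :
  (forall x, f x ^+ 2 = 1) -> (forall x, g x ^+ 2 = 1) ->
  (forall x, A x (+) B x -> f x = g x) ->
  \prod_(x | A x) f x * \prod_(x | B x) f x = \prod_(x | A x) g x * \prod_(x | B x) g x.
Proof.
move=> f_invol g_invol eq_fg; rewrite (prodr_symdiff _ _ f_invol) (prodr_symdiff _ _ g_invol).
by congr (_ * _); apply: eq_bigr => x /andP[PA /negbTE nPB]; apply: eq_fg; rewrite PA nPB.
Qed.

End InvolutiveProducts.

Lemma big_ord_interval (T : Type) (idx : T) (op : Monoid.law idx) (F : nat -> T) N a b :
  (a + b <= N)%N ->
  \big[op/idx]_(n < N | (a <= n < a + b)%N) F n = \big[op/idx]_(0 <= j < b) F (j + a)%N.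
Proof.
move=> le_N; rewrite -(big_mkord (fun n => (a <= n < a + b)%N)).
rewrite [RHS](_ : _ = \big[op/idx]_(a <= n < a + b) F n); last first.
  by rewrite (big_addn 0 (a + b) a) addKn.
by rewrite (big_nat_widenl a 0) // (big_nat_widen 0 (a + b) N).
Qed.

(* The British flag theorem, for the image of the rectangle under [z |-> c - h z]. *)
Lemma british_flag (C : numClosedFieldType) (c h a1 a2 a3 a4 : C) :
  a1 - a2 = a4 - a3 -> 'Re ((a1 - a2) * (a3 - a2)^*) = 0 ->
  `|c - h * a1| ^+ 2 + `|c - h * a3| ^+ 2 = `|c - h * a2| ^+ 2 + `|c - h * a4| ^+ 2.
Proof.
move=> par_eq right_angle; have -> : a4 = a1 - a2 + a3 by rewrite par_eq; ring.
have ortho : (a1 - a2) * (a3 - a2)^* + (a1 - a2)^* * (a3 - a2) = 0.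
  move/eqP: right_angle; rewrite ReE mulf_eq0 invr_eq0 pnatr_eq0 orbF => /eqP.
  by rewrite rmorphM /= conjCK.
apply/eqP; rewrite -subr_eq0 !normCK !(rmorphB, rmorphD, rmorphM) /=; apply/eqP.
rewrite !rmorphB /= in ortho.
transitivity (- (h * h^*) * ((a1 - a2) * (a3^* - a2^*) + (a1^* - a2^*) * (a3 - a2))).
  by ring.
by rewrite ortho mulr0.
Qed.

Section BlockDecomposition.
Variables (Nt : nat) (Nk : 'I_Nt -> nat) (S : {set 'I_(Ntot Nk)}).

Definition admissible (i : nat) : bool :=
  [forall n : 'I_(Ntot Nk), (n \notin S) ==> ~~ gbit Nk i n].

Definition sign_on {R : pzRingType} (i : nat) : R :=
  \prod_(n in S) (-1) ^+ (1 - gbit Nk i n).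

Variables (k : 'I_Nt) (u lo : nat).
Hypothesis lt_lo : (lo < 2 ^ low_width Nk k)%N.

Lemma admissible_join_index t : (t < 2 ^ Nk k)%N ->
  admissible (join_index Nk k u t lo) = admissible (join_index Nk k u 0 lo) && Pk S k t.
Proof.
move=> lt_t; have lt0 : (0 < 2 ^ Nk k)%N by rewrite expn_gt0.
have le_k := off_add_le_Ntot Nk k.
apply/forallP/andP => [adm_t|[/forallP adm_0 /forallP Pt] n].
- split.
    apply/forallP => n; apply/implyP => n_out.
    have [n_in|n_nin] := boolP (in_block Nk k n); first by rewrite gbit_join_index_in // bitm0.
    by rewrite -(gbit_join_index_out u lt_lo (ltn_ord n) n_nin lt_t) (implyP (adm_t n)).
  apply/forallP => j; apply/implyP => j_out.
  have lt_j := ltn_ord j; have lt_n : (off Nk k + j < Ntot Nk)%N by lia.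
  have := implyP (adm_t (Ordinal lt_n)); rewrite -inS_val => /(_ j_out).
  by rewrite gbit_join_index_in /in_block /= ?addKn //; apply/andP; split; lia.
- apply/implyP => n_out.
  have [n_in|n_nin] := boolP (in_block Nk k n).
    rewrite gbit_join_index_in //; move/andP: n_in => [le_off_n lt_n_end].
    have lt_j : (n - off Nk k < Nk k)%N by lia.
    by apply: (implyP (Pt (Ordinal lt_j))); rewrite /= subnKC // inS_val.
  by rewrite (gbit_join_index_out u lt_lo (ltn_ord n) n_nin lt_t) (implyP (adm_0 n)).
Qed.

Lemma signr_nzeros_join_index (R : comPzRingType) t : (t < 2 ^ Nk k)%N ->
  (-1 : R) ^+ nzeros (Nk k) t =
  \prod_(n < Ntot Nk | in_block Nk k n) (-1) ^+ (1 - gbit Nk (join_index Nk k u t lo) n).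
Proof.
move=> lt_t; rewrite /in_block.
rewrite (big_ord_interval _ (fun n => (-1) ^+ (1 - gbit Nk (join_index Nk k u t lo) n)));
  last exact: off_add_le_Ntot.
rewrite /nzeros signr_count -{1}(subn0 (Nk k)) -/(index_iota 0 (Nk k)).
rewrite !big_seq; apply: eq_bigr => j; rewrite mem_index_iota => /andP[_ lt_j].
rewrite (gbit_join_index_in u lt_lo) ?addnK //; first by case: bitm.
by rewrite /in_block; apply/andP; split; lia.
Qed.

Lemma sign_on_join_index (R : comPzRingType) t : (t < 2 ^ Nk k)%N -> Pk S k t ->
  sign_on (join_index Nk k u t lo) =
  sign_on (join_index Nk k u 0 lo) * (-1) ^+ nzeros (Nk k) 0 * (-1) ^+ nzeros (Nk k) t :> R.
Proof.
move=> lt_t Pt; have lt0 : (0 < 2 ^ Nk k)%N by rewrite expn_gt0.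
suff <- : sign_on (join_index Nk k u t lo) * (-1) ^+ nzeros (Nk k) t =
          sign_on (join_index Nk k u 0 lo) * (-1) ^+ nzeros (Nk k) 0 :> R.
  by rewrite -mulrA -expr2 sqrr_sign mulr1.
rewrite /sign_on !signr_nzeros_join_index //.
apply: eq_prodr_symdiff => [n|n|n]; rewrite ?sqrr_sign //.
have [n_in|n_nin] := boolP (in_block Nk k n); last first.
  by rewrite (gbit_join_index_out u lt_lo (ltn_ord n)).
rewrite addbT => n_notin_S; rewrite !gbit_join_index_in // bitm0.
move/andP: n_in => [le_off_n lt_n_end]; have lt_j : (n - off Nk k < Nk k)%N by lia.
suff /negbTE-> : ~~ bitm (Nk k) t (n - off Nk k) by [].
by apply: (implyP (forallP Pt (Ordinal lt_j))); rewrite /= subnKC // inS_val.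
Qed.

Variables (R : realType) (A : 'I_Nt -> nat -> R[i]).

Lemma sum_signed_rect_cond (c h : R[i]) : rect_cond A S k ->
  \sum_(t <- Plist S k) (-1) ^+ nzeros (Nk k) t * `|c - h * A k t| ^+ 2 = 0.
Proof.
move=> [rects [perm_rects _ rect_q]].
rewrite -(perm_big _ perm_rects) big_flatten big_map /= big_seq big1 // => q /rect_q.
case: q => [[[t1 t2] t3] t4] [[par_rect right_rect] odd1 odd3 even2 even4].
rewrite !big_cons big_nil -!(signr_odd _ (nzeros _ _)) odd1 odd3.
rewrite (negbTE even2) (negbTE even4) expr0 expr1.
transitivity ((`|c - h * A k t2| ^+ 2 + `|c - h * A k t4| ^+ 2) -
              (`|c - h * A k t1| ^+ 2 + `|c - h * A k t3| ^+ 2)); first by ring.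
by rewrite (british_flag c h par_rect right_rect) subrr.
Qed.

Variables (Nr : nat) (y : 'I_Nr -> R[i]) (H : 'M[R[i]]_(Nr, Nt)) (l : 'I_Nr).

Lemma dli_join_index t : (t < 2 ^ Nk k)%N ->
  dli Nk A y H l (join_index Nk k u t lo) =
  `|y l - \sum_(k' < Nt | k' != k) H l k' * A k' (loc Nk k' (join_index Nk k u 0 lo))
        - H l k * A k t| ^+ 2.
Proof.
move=> lt_t; rewrite /dli (bigD1 k) //= loc_join_index //.
rewrite (eq_bigr (fun k' => H l k' * A k' (loc Nk k' (join_index Nk k u 0 lo)))).
  by rewrite opprD addrA addrAC.
by move=> k' neq_k'; rewrite loc_join_index_other.
Qed.

Lemma sum_block_eq0 : rect_cond A S k ->
  \sum_(0 <= t < 2 ^ Nk k)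
    (if admissible (join_index Nk k u t lo)
     then dli Nk A y H l (join_index Nk k u t lo) * sign_on (join_index Nk k u t lo)
     else 0) = 0.
Proof.
move=> rect_k.
have [adm0|nadm0] := boolP (admissible (join_index Nk k u 0 lo)); last first.
  rewrite big_seq big1 // => t; rewrite mem_index_iota => /andP[_ lt_t].
  by rewrite admissible_join_index // (negbTE nadm0).
pose c := y l - \sum_(k' < Nt | k' != k) H l k' * A k' (loc Nk k' (join_index Nk k u 0 lo)).
set K : R[i] := sign_on (join_index Nk k u 0 lo) * (-1) ^+ nzeros (Nk k) 0.
transitivity (K * \sum_(t <- Plist S k) (-1) ^+ nzeros (Nk k) t * `|c - H l k * A k t| ^+ 2).
  rewrite big_distrr /Plist big_filter [RHS]big_mkcond /index_iota subn0 /=.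
  rewrite !big_seq; apply: eq_bigr => t; rewrite mem_iota add0n => /andP[_ lt_t].
  rewrite admissible_join_index // adm0 /=; case: ifP => // Pt.
  by rewrite dli_join_index // sign_on_join_index // -/c -/K; ring.
by rewrite sum_signed_rect_cond // mulr0.
Qed.

End BlockDecomposition.

Lemma big_nat_mul_pair (V : nmodType) (G : nat -> V) m n :
  \sum_(0 <= i < m * n) G i = \sum_(0 <= x < m) \sum_(0 <= y < n) G (x * n + y)%N.
Proof.
rewrite big_nat_mul; apply: eq_bigr => x _.
rewrite -{1}(add0n (x * n)%N) big_addn mulSn addnK.
by apply: eq_bigr => y _; rewrite addnC.
Qed.

Theorem proposition3 (R : realType) (Nr Nt : nat) (Nk : 'I_Nt -> nat)
  (A : 'I_Nt -> nat -> R[i]) (S : {set 'I_(Ntot Nk)}) :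
  (exists k : 'I_Nt, @rect_cond Nt Nk R A S k) ->
  forall (y : 'I_Nr -> R[i]) (H : 'M[R[i]]_(Nr, Nt)), @dbar Nt Nk R A Nr y H S = 0.
Proof.
move=> [k rect_k] y H; apply: big1 => l _.
pose G i := if admissible S i then dli Nk A y H l i * sign_on S i else 0.
rewrite big_mkcond; change (\sum_(i < 2 ^ Ntot Nk) G i = 0).
have split_N : (2 ^ Ntot Nk = 2 ^ off Nk k * (2 ^ Nk k * 2 ^ low_width Nk k))%N.
  have le_k := off_add_le_Ntot Nk k.
  by rewrite -!expnD /low_width; congr (expn 2 _); lia.
rewrite -(big_mkord xpredT G) split_N big_nat_mul_pair big1 // => u _.
rewrite big_nat_mul_pair exchange_big_nat big_seq big1 // => lo.
rewrite mem_index_iota -expnD => /andP[_ lt_lo].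
exact: (sum_block_eq0 u lt_lo y H l rect_k).
Qed.
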